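(* Let $G$ be the graph constructed as follows. Take three vertex-disjoint copies $H_1,H_2,H_3$ of $K_2\vee\overline{K_2}$ ($K_4$ minus an edge). In each $H_i$ choose a vertex $v_i$ of degree $2$. Add a new vertex $u$ adjacent to $v_1,v_2,v_3$. Then $G$ is a graph with $\Delta(G)=3$ containing no odd cycle of length greater than $3$, and $G$ is not $3$-edge-orientable.
   Context: $G_1\vee G_2$ denotes the join: the disjoint union of $G_1$ and $G_2$ plus all edges between them. An orientation of a graph is any digraph obtained by replacing each edge $xy$ with the arc $(x,y)$, with the arc $(y,x)$, or with both arcs. A kernel of a digraph $D$ is an independent set $S$ such that every vertex of $D-S$ has an out-neighbor in $S$. $D$ is kernel-perfect if every induced subdigraph of $D$ has a kernel. A graph $G$ is $k$-edge-orientable if its line graph $L(G)$ admits a kernel-perfect orientation in which every vertex has out-degree at most $k-1$. *)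

From mathcomp Require Import all_boot all_order.
Set Implicit Arguments. Unset Strict Implicit. Unset Printing Implicit Defensive.

(* A simple graph on a finite type T: a symmetric irreflexive relation. *)

Definition edge_set (T : finType) (e : rel T) : {set {set T}} :=
  [set [set x; y] | x in T, y in T & e x y].

(* Vertices of the line graph L(G): the edges of G. *)
Definition edge_of (T : finType) (e : rel T) := {A : {set T} | A \in edge_set e}.

Definition line_adj (T : finType) (e : rel T) : rel (edge_of e) :=
  fun A B => (A != B) && (val A :&: val B != set0).
Arguments line_adj {T} e.

Definition is_orientation (V : finType) (adj D : rel V) : Prop :=
  (forall x y, D x y -> adj x y) /\ (forall x y, adj x y -> D x y || D y x).

Definition is_kernel_of (V : finType) (D : rel V) (S K : {set V}) : Prop :=
  K \subset S /\
  (forall x y, x \in K -> y \in K -> ~~ D x y) /\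
  (forall x, x \in S -> x \notin K -> exists y, y \in K /\ D x y).

Definition kernel_perfect (V : finType) (D : rel V) : Prop :=
  forall S : {set V}, exists K : {set V}, is_kernel_of D S K.

Definition outdeg (V : finType) (D : rel V) (x : V) : nat := #|[set y | D x y]|.

Definition k_edge_orientable (T : finType) (e : rel T) (k : nat) : Prop :=
  exists D : rel (edge_of e),
    is_orientation (line_adj e) D /\ kernel_perfect D /\
    forall x, outdeg D x <= k.-1.

Definition max_degree (T : finType) (e : rel T) : nat :=
  \max_(x : T) #|[set y | e x y]|.

(* Cycles as (not necessarily induced) subgraphs: sequences of distinct
   vertices, consecutive ones adjacent, and last adjacent to first. *)
Definition no_odd_cycle_longer_than_3 (T : finType) (e : rel T) : Prop :=
  forall s : seq T, uniq s -> cycle e s -> odd (size s) -> size s <= 3.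

(* For i = 0,1,2 the copy H_i of K_2 v co-K_2
   has vertices 4i (a_i), 4i+1 (b_i) forming the K_2, and 4i+2 (c_i = v_i),
   4i+3 (d_i) forming the co-K_2 (degree 2 in H_i). Vertex 12 is u. *)
Definition G_edges : seq (nat * nat) :=
  [:: (0,1); (0,2); (0,3); (1,2); (1,3);
      (4,5); (4,6); (4,7); (5,6); (5,7);
      (8,9); (8,10); (8,11); (9,10); (9,11);
      (12,2); (12,6); (12,10)].

Definition Gadj : rel 'I_13 :=
  fun x y => ((nat_of_ord x, nat_of_ord y) \in G_edges)
          || ((nat_of_ord y, nat_of_ord x) \in G_edges).

From mathcomp Require Import all_boot all_order.
Set Implicit Arguments. Unset Strict Implicit. Unset Printing Implicit Defensive.

(* In a kernel-perfect digraph every set of pairwise joined vertices, in particular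
   every triangle, has a sink: a kernel of the induced subdigraph is a single vertex
   absorbing all the others.  Suppose L(G) has such an orientation with out-degrees at
   most 2.  In a copy of K_4 - e, the edge between the two vertices of degree 3 is the
   hub of a wheel whose rim is the 4-cycle of the other four edges, and the edge u v_i
   is joined to the two rim edges at v_i.  If u v_i pointed into neither of them, both
   would have a single out-arc left; the orientations this forces around the wheel
   leave a wheel triangle without a sink.  So each edge at u has an out-arc into its
   own copy.  But the three edges at u form a triangle of L(G), and of the two edges
   pointing to its sink, the tail of the arc between them has three out-arcs.
   The degree and cycle conditions hold because u is a cut vertex with exactly one
   neighbour in each of the three blocks of four vertices. *)

(* Proves [uniq t] for a list [t] of entries of [U]: identifying two of them would
   repeat an entry of [U]. *)
Ltac uniq_from U :=
  rewrite /= !inE !negb_or ?andbT; repeat (apply/andP; split);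
  apply/eqP => eq_xy; subst; move: U; rewrite /= !inE !eqxx ?(orbT, orTb) /= ?andbF.

Section KernelPerfectDigraph.
Variables (V : finType) (D : rel V).

Definition joined (x y : V) : bool := D x y || D y x.

Lemma joinedC x y : joined x y = joined y x.
Proof. exact: orbC. Qed.

Lemma outdeg_ge_uniq x s : uniq s -> all (D x) s -> size s <= outdeg D x.
Proof.
move=> s_uniq /allP s_out; rewrite /outdeg -(card_uniqP s_uniq).
by apply/subset_leq_card/subsetP => y /s_out; rewrite inE.
Qed.

Hypothesis D_kp : kernel_perfect D.

Lemma kernel_perfect_semicomplete_sink (S : {set V}) :
  S != set0 -> {in S &, forall x y, x != y -> joined x y} ->
  exists2 x, x \in S & {in S, forall y, y != x -> D y x}.
Proof.
move=> /set0Pn[a aS] S_joined.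
have [K [/subsetP KS [K_indep K_abs]]] := D_kp S.
have K_single x y : x \in K -> y \in K -> x = y.
  move=> xK yK; apply/eqP/negP => /negP/(S_joined _ _ (KS _ xK) (KS _ yK)).
  by rewrite /joined (negbTE (K_indep _ _ xK yK)) (negbTE (K_indep _ _ yK xK)).
have [x xK] : exists x, x \in K.
  case: (boolP (a \in K)) => [aK | /(K_abs a aS)[x [xK _]]]; first by exists a.
  by exists x.
exists x => [|y yS yx]; first exact: KS.
have yK : y \notin K by apply: contra yx => yK; apply/eqP/K_single.
by have [z [zK yz]] := K_abs y yS yK; rewrite (K_single _ _ xK zK).
Qed.

Lemma triangle_sink a b c : uniq [:: a; b; c] ->
  joined a b -> joined b c -> joined a c ->
  [\/ D b a /\ D c a, D a b /\ D c b | D a c /\ D b c].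
Proof.
rewrite /= !inE !negb_or => /and3P[/andP[a_b a_c] b_c _] ab bc ac.
have S_joined : {in [set a; b; c] &, forall x y, x != y -> joined x y}.
  move=> x y; rewrite !inE => /orP[/orP[]|]/eqP-> /orP[/orP[]|]/eqP->;
    by rewrite ?eqxx // => _; rewrite // joinedC.
have [|x] := kernel_perfect_semicomplete_sink _ S_joined.
  by apply/set0Pn; exists a; rewrite !inE eqxx.
rewrite !inE => /orP[/orP[]|]/eqP-> x_sink; [constructor 1 | constructor 2 | constructor 3];
  by split; apply: x_sink; rewrite ?inE ?eqxx ?orbT // eq_sym.
Qed.

Hypothesis D_out : forall x, outdeg D x <= 2.

Lemma no_three_out_arcs x a b c :
  D x a -> D x b -> D x c -> uniq [:: a; b; c] -> False.
Proof.
move=> xa xb xc abc; have := outdeg_ge_uniq (x := x) abc; rewrite /= xa xb xc => /(_ isT).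
by rewrite ltnNge D_out.
Qed.

Lemma saturated_arc_in x y a b :
  D y a -> D y b -> joined x y -> uniq [:: a; b; x] -> D x y.
Proof. by move=> ya yb /orP[// | yx] /(no_three_out_arcs ya yb yx). Qed.

Lemma sink_with_escapes x y z y' z' :
  D y x -> D z x -> joined y z -> D y y' -> D z z' ->
  uniq [:: x; z; y'] -> uniq [:: x; y; z'] -> False.
Proof.
move=> yx zx /orP[yz | zy] yy' zz'; first by move=> /(no_three_out_arcs yx yz yy').
by move=> _ /(no_three_out_arcs zx zy zz').
Qed.

Lemma triangle_escape a b c a' b' c' :
  D a a' -> D b b' -> D c c' ->
  uniq [:: a; b; c; a'] -> uniq [:: a; b; c; b'] -> uniq [:: a; b; c; c'] ->
  joined a b -> joined b c -> joined a c -> False.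
Proof.
move=> aa' bb' cc' Ua Ub Uc ab bc ac.
have abc : uniq [:: a; b; c] by uniq_from Ua.
case: (triangle_sink abc ab bc ac) => -[xy zy].
- by apply: (sink_with_escapes xy zy bc bb' cc'); [uniq_from Ub | uniq_from Uc].
- by apply: (sink_with_escapes xy zy ac aa' cc'); [uniq_from Ua | uniq_from Uc].
- by apply: (sink_with_escapes xy zy ab aa' bb'); [uniq_from Ua | uniq_from Ub].
Qed.

Lemma wheel_rim_sink h p q r s e : uniq [:: h; p; q; r; s; e] ->
  joined q h -> joined r h -> joined h s -> joined p q -> joined q r -> joined r s ->
  D p e -> D s e -> D h p -> D s p -> False.
Proof.
move=> U qh rh hs pq qr rs pe se hp sp.
have h_s : D h s by apply: (saturated_arc_in se sp hs); uniq_from U.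
have r_s : D r s by apply: (saturated_arc_in se sp rs); uniq_from U.
have q_h : D q h by apply: (saturated_arc_in hp h_s qh); uniq_from U.
have r_h : D r h by apply: (saturated_arc_in hp h_s rh); uniq_from U.
have q_r : D q r by apply: (saturated_arc_in r_s r_h qr); uniq_from U.
have p_q : D p q by apply: (saturated_arc_in q_h q_r pq); uniq_from U.
have hpq : uniq [:: h; p; q] by uniq_from U.
have hp' : joined h p by rewrite /joined hp.
have hq : joined h q by rewrite joinedC.
case: (triangle_sink hpq hp' pq hq) => -[yx zx].
- by apply: (no_three_out_arcs pe p_q yx); uniq_from U.
- by apply: (no_three_out_arcs q_h q_r zx); uniq_from U.
- by apply: (no_three_out_arcs hp h_s yx); uniq_from U.
Qed.

Lemma wheel_pendant_escape h p q r s e : uniq [:: h; p; q; r; s; e] ->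
  joined h p -> joined h q -> joined h r -> joined h s ->
  joined p q -> joined q r -> joined r s -> joined s p ->
  joined e p -> joined e s -> D e p || D e s.
Proof.
move=> U hp hq hr hs pq qr rs sp /orP[-> // | pe] /orP[-> | se]; rewrite ?orbT //; exfalso.
have hps : uniq [:: h; p; s] by uniq_from U.
have ps : joined p s by rewrite joinedC.
case: (triangle_sink hps hp ps hs) => -[xy zy].
- case/orP: sp => [s_p | p_s].
    by apply: (no_three_out_arcs se zy s_p); uniq_from U.
  by apply: (no_three_out_arcs pe xy p_s); uniq_from U.
- by apply: (@wheel_rim_sink h p q r s e) => //; rewrite joinedC.
- apply: (@wheel_rim_sink h s r q p e) => //; first by uniq_from U.
  all: by rewrite joinedC.
Qed.

End KernelPerfectDigraph.

Section CutVertex.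
Variables (T : finType) (e : rel T) (u : T) (c : T -> nat).
Hypothesis e_sym : symmetric e.
Hypothesis c_edge : forall x y, e x y -> x != u -> y != u -> c x = c y.
Hypothesis c_nbr_inj : {in [pred x | e u x] &, injective c}.

Lemma path_avoiding_cut_const x s :
  path e x s -> u \notin x :: s -> {in x :: s, forall y, c y = c x}.
Proof.
elim: s x => [|y s IH] x /=; first by move=> _ _ z; rewrite inE => /eqP->.
move=> /andP[xy ys]; rewrite in_cons negb_or eq_sym => /andP[xu uys] z.
have yu : y != u by apply: contraNneq uys => ->; apply: mem_head.
by rewrite in_cons => /predU1P[-> // | zs]; rewrite (IH y ys uys z zs) (c_edge xy xu yu).
Qed.

Lemma cycle_through_cut_size s : uniq s -> cycle e s -> u \in s -> size s <= 2.
Proof.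
move=> s_uniq s_cycle /rot_to[i t s_rot].
move: s_uniq s_cycle; rewrite -(size_rot i) -(rot_uniq i) -(rot_cycle i) {}s_rot.
case: t => [|a t] //=; rewrite rcons_path => /andP[u_notin a_uniq] /and3P[ua a_path lu].
have c_last := path_avoiding_cut_const a_path u_notin (mem_last a t).
have last_a : last a t = a by apply: c_nbr_inj; rewrite ?inE // e_sym.
case: t {a_path u_notin lu c_last} a_uniq last_a => [// | b t] /= /andP[a_notin _] last_a.
by rewrite -last_a mem_last in a_notin.
Qed.

Lemma cycle_avoiding_cut_size s x :
  uniq s -> cycle e s -> u \notin s -> x \in s -> size s <= #|[set y | c y == c x]|.
Proof.
case: s => [// | a t] s_uniq s_cycle u_notin x_in.
rewrite -(card_uniqP s_uniq); apply/subset_leq_card/subsetP => y y_in.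
move: s_cycle; rewrite /= rcons_path => /andP[a_path _].
have c_const := path_avoiding_cut_const a_path u_notin.
by rewrite inE (c_const y y_in) (c_const x x_in).
Qed.

End CutVertex.

Lemma eq_set2 (T : finType) (x y z w : T) :
  ([set x; y] == [set z; w]) = (x == z) && (y == w) || (x == w) && (y == z).
Proof.
apply/idP/idP => [/eqP E | /orP[] /andP[/eqP-> /eqP->] //]; last by rewrite setUC.
have : x \in [set z; w] by rewrite -E !inE eqxx.
have : y \in [set z; w] by rewrite -E !inE eqxx orbT.
have : z \in [set x; y] by rewrite E !inE eqxx.
have : w \in [set x; y] by rewrite E !inE eqxx orbT.
by rewrite !inE => /orP[]/eqP-> /orP[]/eqP->; rewrite !eqxx ?orbb ?orbT ?andbT.
Qed.

Section LineGraphEdges.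
Variables (T : finType) (e : rel T).

Lemma mem_edge_set x y : e x y -> [set x; y] \in edge_set e.
Proof. by move=> xy; apply/imset2P; exists x y; rewrite ?inE. Qed.

Definition edge x y (xy : e x y) : edge_of e := exist _ [set x; y] (mem_edge_set xy).

Variables (x y z w : T) (xy : e x y) (zw : e z w).

Lemma edge_eqE :
  (edge xy == edge zw) = (x == z) && (y == w) || (x == w) && (y == z).
Proof. exact: eq_set2. Qed.

Lemma line_adj_edge : line_adj e (edge xy) (edge zw) =
  ~~ ((x == z) && (y == w) || (x == w) && (y == z)) && [|| x == z, x == w, y == z | y == w].
Proof.
rewrite /line_adj edge_eqE /=; congr (_ && _); apply/set0Pn/idP => [[v] | ].
  by rewrite !inE => /andP[/orP[]/eqP-> /orP[]/eqP->]; rewrite eqxx ?orbT.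
by case/or4P => /eqP->; [exists z | exists w | exists z | exists w];
  rewrite !inE !eqxx ?orbT.
Qed.

End LineGraphEdges.

Lemma card_ord_count n (P : pred nat) : #|[set i : 'I_n | P i]| = count P (iota 0 n).
Proof. by rewrite cardsE cardE /enum_mem size_filter -enumT -val_enum_ord count_map. Qed.

Lemma ord_forall_iota n (P : pred nat) : all P (iota 0 n) -> forall i : 'I_n, P i.
Proof. by move=> /allP P_iota i; apply: P_iota; rewrite mem_iota ltn_ord. Qed.

Lemma ord_forall2_iota n (P : nat -> nat -> bool) :
  all (fun m => all (P m) (iota 0 n)) (iota 0 n) -> forall i j : 'I_n, P i j.
Proof. by move=> P_iota i; apply/ord_forall_iota/(ord_forall_iota P_iota). Qed.

Definition Gadj_nat (m n : nat) : bool := ((m, n) \in G_edges) || ((n, m) \in G_edges).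

Local Notation vtx k := (@Ordinal 13 k isT).
Local Notation gedge m n := (@edge _ Gadj (vtx m) (vtx n) isT).

Lemma max_degree_G : max_degree Gadj = 3.
Proof.
apply/eqP; rewrite eqn_leq; apply/andP; split.
  apply/bigmax_leqP => x _; rewrite (card_ord_count _ (Gadj_nat x)).
  exact: (ord_forall_iota (P := fun m => count (Gadj_nat m) (iota 0 13) <= 3)).
by apply: leq_trans (leq_bigmax (vtx 12)); rewrite (card_ord_count _ (Gadj_nat 12)).
Qed.

Lemma Gadj_sym : symmetric Gadj.
Proof. by move=> x y; rewrite /Gadj orbC. Qed.

Definition Gblock (x : 'I_13) : nat := x %/ 4.

Lemma Gblock_edge x y : Gadj x y -> x != vtx 12 -> y != vtx 12 -> Gblock x = Gblock y.
Proof.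
move=> xy xu yu; apply/eqP; apply: (implyP (ord_forall2_iota (n := 13) (P := fun m n =>
  [&& Gadj_nat m n, m != 12 & n != 12] ==> (m %/ 4 == n %/ 4)) isT x y)).
exact/and3P.
Qed.

Lemma Gblock_nbr_inj : {in [pred x | Gadj (vtx 12) x] &, injective Gblock}.
Proof.
move=> x y ux uy bxy; apply/eqP; apply: (implyP (ord_forall2_iota (n := 13) (P := fun m n =>
  [&& Gadj_nat 12 m, Gadj_nat 12 n & m %/ 4 == n %/ 4] ==> (m == n)) isT x y)).
by apply/and3P; split; [exact: ux | exact: uy | exact/eqP].
Qed.

Lemma card_Gblock x : #|[set y | Gblock y == Gblock x]| <= 4.
Proof.
rewrite (card_ord_count _ (fun n => n %/ 4 == x %/ 4)).
exact: (ord_forall_iota (P := fun m => count (fun n => n %/ 4 == m %/ 4) (iota 0 13) <= 4)).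
Qed.

Lemma no_long_odd_cycle_G : no_odd_cycle_longer_than_3 Gadj.
Proof.
move=> s s_uniq s_cycle s_odd; case: (boolP (vtx 12 \in s)) => [u_in | u_notin].
  apply: (@leq_trans 2) => //.
  exact: (cycle_through_cut_size Gadj_sym Gblock_edge Gblock_nbr_inj s_uniq s_cycle u_in).
case: s s_uniq s_cycle s_odd u_notin => [// | x t] s_uniq s_cycle s_odd u_notin.
have := cycle_avoiding_cut_size Gblock_edge s_uniq s_cycle u_notin (mem_head x t).
by move/leq_trans/(_ (card_Gblock x)); move: s_odd; case: (size _) => [|[|[|[|[]]]]].
Qed.

Ltac decide_edges := rewrite ?line_adj_edge /= ?inE ?edge_eqE.

Lemma not_3_edge_orientable_G : ~ k_edge_orientable Gadj 3.
Proof.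
move=> [D [[_ D_join] [D_kp D_out]]].
have escape0 : D (gedge 12 2) (gedge 0 2) || D (gedge 12 2) (gedge 1 2).
  apply: (wheel_pendant_escape D_kp D_out (h := gedge 0 1) (q := gedge 0 3)
    (r := gedge 1 3)); by try apply: D_join; decide_edges.
have escape1 : D (gedge 12 6) (gedge 4 6) || D (gedge 12 6) (gedge 5 6).
  apply: (wheel_pendant_escape D_kp D_out (h := gedge 4 5) (q := gedge 4 7)
    (r := gedge 5 7)); by try apply: D_join; decide_edges.
have escape2 : D (gedge 12 10) (gedge 8 10) || D (gedge 12 10) (gedge 9 10).
  apply: (wheel_pendant_escape D_kp D_out (h := gedge 8 9) (q := gedge 8 11)
    (r := gedge 9 11)); by try apply: D_join; decide_edges.
move: escape0 escape1 escape2 => /orP[] e0 /orP[] e1 /orP[] e2;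
  by apply: (triangle_escape D_kp D_out e0 e1 e2); try apply: D_join; decide_edges.
Qed.

Theorem mainTheorem20 :
  max_degree Gadj = 3 /\ no_odd_cycle_longer_than_3 Gadj /\
  ~ k_edge_orientable Gadj 3.
Proof. exact: (conj max_degree_G (conj no_long_odd_cycle_G not_3_edge_orientable_G)). Qed.
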